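(* Let $\mathcal{X}^c=(X^c,\tau^c,\Phi^c,V^c)$ be the canonical model for $EL_{int}$. Then for every $\varphi\in\mathcal{L}_{EL_{int}}$ and every $x\in X^c$: $\varphi\in x$ iff $\mathcal{X}^c,(x,\theta^* )\models\varphi$.
   Context: Fix a countable set $\mathit{Prop}$ and a finite non-empty set $\mathcal{A}$ of agents. $\mathcal{L}_{EL_{int}}$: $\varphi ::= p \mid \neg\varphi \mid \varphi\wedge\varphi \mid K_i\varphi \mid \mathrm{int}(\varphi)$. $EL_{int}$ is the axiom system with axioms: propositional tautologies; $K_i(\varphi\to\psi)\to(K_i\varphi\to K_i\psi)$; $K_i\varphi\to\varphi$; $K_i\varphi\to K_iK_i\varphi$; $\neg K_i\varphi\to K_i\neg K_i\varphi$; $\mathrm{int}(\varphi\to\psi)\to(\mathrm{int}(\varphi)\to\mathrm{int}(\psi))$; $\mathrm{int}(\varphi)\to\varphi$; $\mathrm{int}(\varphi)\to\mathrm{int}(\mathrm{int}(\varphi))$; $K_i\varphi\to\mathrm{int}(\varphi)$; rules: modus ponens, $K_i$-necessitation, $\mathrm{int}$-necessitation. Consistent and maximally consistent sets of $\mathcal{L}_{EL_{int}}$-formulas are defined as usual w.r.t. $EL_{int}$. Canonical model: $X^c$ is the set of all maximally consistent sets; for $i\in\mathcal{A}$, $x\sim_i y$ iff for all $\varphi$, $K_i\varphi\in x\Leftrightarrow K_i\varphi\in y$; $[x]_i$ is the $\sim_i$-class of $x$; $\widehat{\varphi}=\{y\in X^c\mid\varphi\in y\}$; $\tau^c$ is the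 topology on $X^c$ generated by the subbase $\{[x]_i\cap\widehat{\mathrm{int}(\varphi)}\mid x\in X^c,\varphi\in\mathcal{L}_{EL_{int}},i\in\mathcal{A}\}$; $x\in V^c(p)$ iff $p\in x$; $\theta^*:X^c\to(\mathcal{A}\to\tau^c)$ is the total function $\theta^*(x)(i)=[x]_i$, and $\Phi^c=\{\theta^*|_U\mid U\in\tau^c\}$, where $\theta^*|_U$ has domain $U$ and $\theta^*|_U(x)(i)=[x]_i\cap U$. Semantics at $(x,\theta)$ with $x\in Dom(\theta)$: $p$ iff $x\in V^c(p)$; Booleans usual; $K_i\varphi$ iff $\varphi$ holds at $(y,\theta)$ for all $y\in\theta(x)(i)$; $\mathrm{int}(\varphi)$ iff $x\in\mathrm{Int}([\![\varphi]\!]^\theta)$ (interior in $\tau^c$), where $[\![\varphi]\!]^\theta=\{y\in Dom(\theta)\mid(y,\theta)\models\varphi\}$. *)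

From Stdlib Require Import List Bool.
Import ListNotations.

Inductive form (P A : Type) : Type :=
| Var (p : P)
| Neg (a : form P A)
| And (a b : form P A)
| K (i : A) (a : form P A)
| Int (a : form P A).

Arguments Var {P A} p.
Arguments Neg {P A} a.
Arguments And {P A} a b.
Arguments K {P A} i a.
Arguments Int {P A} a.

Section EL_int.
Variables (P A : Type).
Local Notation form := (form P A).

Definition Imp (a b : form) : form := Neg (And a (Neg b)).

(* Propositional tautologies: true under every Boolean valuation that treats
   atoms p, K_i a and int(a) as propositional atoms. *)
Fixpoint beval (v : form -> bool) (a : form) : bool :=
  match a with
  | Neg b => negb (beval v b)
  | And b c => beval v b && beval v c
  | _ => v a
  end.

Definition tautology (a : form) : Prop := forall v, beval v a = true.

Inductive derivable : form -> Prop :=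
| D_taut a : tautology a -> derivable a
| D_K i a b : derivable (Imp (K i (Imp a b)) (Imp (K i a) (K i b)))
| D_T i a : derivable (Imp (K i a) a)
| D_4 i a : derivable (Imp (K i a) (K i (K i a)))
| D_5 i a : derivable (Imp (Neg (K i a)) (K i (Neg (K i a))))
| D_intK a b : derivable (Imp (Int (Imp a b)) (Imp (Int a) (Int b)))
| D_intT a : derivable (Imp (Int a) a)
| D_int4 a : derivable (Imp (Int a) (Int (Int a)))
| D_Kint i a : derivable (Imp (K i a) (Int a))
| D_MP a b : derivable (Imp a b) -> derivable a -> derivable b
| D_NecK i a : derivable a -> derivable (K i a)
| D_NecInt a : derivable a -> derivable (Int a).

Fixpoint imps (l : list form) (a : form) : form :=
  match l with
  | [] => a
  | b :: l' => Imp b (imps l' a)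
  end.

Definition derives (G : form -> Prop) (a : form) : Prop :=
  exists l, (forall b, In b l -> G b) /\ derivable (imps l a).

Definition consistent (G : form -> Prop) : Prop :=
  ~ exists a, derives G a /\ derives G (Neg a).

Definition max_consistent (G : form -> Prop) : Prop :=
  consistent G /\
  forall a, ~ G a -> ~ consistent (fun b => G b \/ b = a).

Record mcs : Type := Mcs { mcs_set : form -> Prop; mcs_max : max_consistent mcs_set }.

Definition hat (a : form) (y : mcs) : Prop := mcs_set y a.

Definition sim (i : A) (x y : mcs) : Prop :=
  forall a, mcs_set x (K i a) <-> mcs_set y (K i a).

Definition subbase_c (B : mcs -> Prop) : Prop :=
  exists (x : mcs) (i : A) (a : form), forall y, B y <-> (sim i x y /\ hat (Int a) y).

Definition open_c (U : mcs -> Prop) : Prop :=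
  forall x, U x ->
    exists l : list (mcs -> Prop),
      (forall B, In B l -> subbase_c B /\ B x) /\
      (forall y, (forall B, In B l -> B y) -> U y).

Definition interior_c (S : mcs -> Prop) (x : mcs) : Prop :=
  exists U, open_c U /\ U x /\ (forall y, U y -> S y).

Definition V_c (p : P) (x : mcs) : Prop := hat (Var p) x.

(* a (partial) neighbourhood function theta: its domain and its values
   theta(x)(i) as sets *)
Record nbhd_fun : Type := NF { dom : mcs -> Prop; fn : mcs -> A -> mcs -> Prop }.

Definition theta_star : nbhd_fun := NF (fun _ => True) (fun x i y => sim i x y).

Definition theta_restrict (U : mcs -> Prop) : nbhd_fun :=
  NF U (fun x i y => sim i x y /\ U y).

Definition Phi_c (th : nbhd_fun) : Prop :=
  exists U, open_c U /\ th = theta_restrict U.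

Fixpoint sat (th : nbhd_fun) (x : mcs) (a : form) : Prop :=
  match a with
  | Var p => V_c p x
  | Neg b => ~ sat th x b
  | And b c => sat th x b /\ sat th x c
  | K i b => forall y, fn th x i y -> sat th y b
  | Int b => interior_c (fun y => dom th y /\ sat th y b) x
  end.

End EL_int.

Arguments mcs_set {P A} m _.
Arguments theta_star {P A}.

(* Both [K_i] and [int] are normal operators, so a maximally consistent [x]
   omitting [M b] has an [M]-successor [y] (a maximally consistent extension,
   by Lindenbaum's lemma, of [{c | M c ∈ x} ∪ {¬b}]) omitting [b].  For
   [K_i], axioms 4 and 5 put that successor in [[x]_i].  For [int], the
   theorems [K_i d → int K_i d] and [¬K_i d → int ¬K_i d] put it in [[x]_j]
   for every agent [j], and axiom 4 for [int] puts it in every subbasic set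
   [[x']_j ∩ int(a)^] containing [x], hence in every open set around [x]; so
   [x] is not in the interior of [b^].  Conversely, if [int b ∈ x] then
   [[x]_i ∩ int(b)^] is an open neighbourhood of [x] inside [b^] by axiom T
   for [int], for any agent [i] (this is where [A] must be inhabited). *)
From Pilot Require Import Defs.
From Stdlib Require Import List Bool Classical ClassicalEpsilon Cantor PeanoNat.
Import ListNotations.

Section Canonical.
Variables P A : Type.
Local Notation form := (form P A).
Local Notation der := (derivable P A).
Local Notation Imp := (Imp P A).
Local Notation imps := (imps P A).
Local Notation beval := (beval P A).
Local Notation derives := (derives P A).
Local Notation consistent := (consistent P A).
Local Notation mcs := (mcs P A).

Lemma beval_imp v a b :
  beval v (Imp a b) = true <-> (beval v a = true -> beval v b = true).
Proof. cbn. destruct (beval v a), (beval v b); cbn; intuition congruence. Qed.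

Lemma beval_neg v a : beval v (Neg a) = true <-> beval v a <> true.
Proof. cbn. destruct (beval v a); cbn; intuition congruence. Qed.

Lemma beval_imps v l a : beval v (imps l a) = true <->
  ((forall b, In b l -> beval v b = true) -> beval v a = true).
Proof.
  induction l as [|c l IH]; cbn [Defs.imps In].
  - split; auto.
  - rewrite beval_imp, IH. split.
    + intros H Hl. apply H; auto.
    + intros H Hc Hl. apply H. intros b [<-|Hb]; auto.
Qed.

Lemma derivable_imps_mp L c : der (imps L c) -> (forall b, In b L -> der b) -> der c.
Proof.
  induction L as [|b L IH]; cbn; auto.
  intros H HL. apply IH; auto. eapply D_MP; eauto.
Qed.

Lemma derivable_taut_conseq L c :
  (forall v, (forall b, In b L -> beval v b = true) -> beval v c = true) ->
  (forall b, In b L -> der b) -> der c.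
Proof.
  intros Hv HL. apply (derivable_imps_mp L); auto.
  apply D_taut. intro v. apply beval_imps, Hv.
Qed.

Lemma derivable_imp_trans a b c : der (Imp a b) -> der (Imp b c) -> der (Imp a c).
Proof.
  intros Hab Hbc. apply (derivable_taut_conseq [Imp a b; Imp b c]).
  - intros v Hv. pose proof (Hv _ (or_introl eq_refl)) as E1.
    pose proof (Hv _ (or_intror (or_introl eq_refl))) as E2.
    rewrite beval_imp in *. auto.
  - intros e [<-|[<-|[]]]; assumption.
Qed.

Lemma derivable_imps_incl l l' c : incl l l' -> der (imps l c) -> der (imps l' c).
Proof.
  intros Hl Hd. apply (derivable_taut_conseq [imps l c]).
  - intros v Hv. specialize (Hv _ (or_introl eq_refl)). rewrite beval_imps in *.
    intros H. apply Hv. intros b Hb. apply H, Hl, Hb.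
  - intros e [<-|[]]. exact Hd.
Qed.

Lemma derives_mem (G : form -> Prop) a : G a -> derives G a.
Proof.
  intros H. exists [a]. split.
  - intros b [<-|[]]. exact H.
  - apply D_taut. intro v. apply beval_imps. intros Hb. apply Hb. left; reflexivity.
Qed.

Lemma derives_derivable (G : form -> Prop) a : der a -> derives G a.
Proof. intros H. exists []. cbn. tauto. Qed.

Lemma derives_mono (G H : form -> Prop) a :
  (forall b, G b -> H b) -> derives G a -> derives H a.
Proof. intros HGH [l [Hl Hd]]. exists l. auto. Qed.

Lemma derives_mp (G : form -> Prop) a b : derives G (Imp a b) -> derives G a -> derives G b.
Proof.
  intros [l1 [H1 D1]] [l2 [H2 D2]]. exists (l1 ++ l2). split.
  { intros c Hc. apply in_app_or in Hc. destruct Hc; auto. }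
  apply (derivable_taut_conseq [imps (l1 ++ l2) (Imp a b); imps (l1 ++ l2) a]).
  - intros v Hv. pose proof (Hv _ (or_introl eq_refl)) as E1.
    pose proof (Hv _ (or_intror (or_introl eq_refl))) as E2.
    rewrite beval_imps in *. rewrite beval_imp in E1. auto.
  - intros e [<-|[<-|[]]]; eapply derivable_imps_incl; eauto;
      intros c Hc; apply in_or_app; auto.
Qed.

Lemma derives_imps (G : form -> Prop) L c :
  derives G (imps L c) -> (forall b, In b L -> derives G b) -> derives G c.
Proof.
  induction L as [|b L IH]; cbn; intros Hd HL; auto.
  apply IH; auto. eapply derives_mp; eauto.
Qed.

Lemma derives_taut_conseq (G : form -> Prop) L c :
  (forall b, In b L -> derives G b) ->
  (forall v, (forall b, In b L -> beval v b = true) -> beval v c = true) ->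
  derives G c.
Proof.
  intros HL Hv. apply (derives_imps G L); auto.
  apply derives_derivable, D_taut. intro v. apply beval_imps, Hv.
Qed.

Lemma incl_extension_split (G : form -> Prop) a l :
  (forall b, In b l -> G b \/ b = a) ->
  exists l', (forall b, In b l' -> G b) /\ incl l (a :: l').
Proof.
  induction l as [|c l IH]; intros H.
  - exists []. split; [intros _ []|intros _ []].
  - destruct IH as [l' [H1 H2]]. { intros b Hb. apply H. right; exact Hb. }
    destruct (H c (or_introl eq_refl)) as [Hc|<-].
    + exists (c :: l'). split.
      * intros b [<-|Hb]; auto.
      * intros b [<-|Hb]; [right; left; reflexivity|].
        destruct (H2 b Hb) as [<-|Hb']; [left|right; right]; auto.
    + exists l'. split; auto. intros b [<-|Hb]; [left; reflexivity|auto].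
Qed.

Lemma derives_deduction (G : form -> Prop) a c :
  derives (fun b => G b \/ b = a) c -> derives G (Imp a c).
Proof.
  intros [l [Hl Hd]]. destruct (incl_extension_split G a l Hl) as [l' [H1 H2]].
  exists l'. split; auto.
  apply (derivable_taut_conseq [imps (a :: l') c]).
  - intros v Hv. specialize (Hv _ (or_introl eq_refl)). cbn [Defs.imps] in Hv.
    rewrite beval_imp, beval_imps in Hv. rewrite beval_imps, beval_imp. auto.
  - intros e [<-|[]]. exact (derivable_imps_incl _ _ _ H2 Hd).
Qed.

Lemma inconsistent_derives (G : form -> Prop) c : ~ consistent G -> derives G c.
Proof.
  intros H. apply NNPP in H. destruct H as [a [H1 H2]].
  apply (derives_taut_conseq G [a; Neg a]).
  - intros b [<-|[<-|[]]]; assumption.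
  - intros v Hv. exfalso. apply (beval_neg v a); apply Hv; cbn; auto.
Qed.

Lemma consistent_mono (G H : form -> Prop) :
  (forall b, G b -> H b) -> consistent H -> consistent G.
Proof. intros HGH Hc [a [H1 H2]]. apply Hc. exists a. split; eapply derives_mono; eauto. Qed.

Section MaximalConsistent.
Variable x : mcs.
Local Notation mx := (mcs_set x).

Lemma mcs_consistent : consistent mx.
Proof. exact (proj1 (mcs_max _ _ x)). Qed.

Lemma mcs_not_mem_derives_neg a : ~ mx a -> derives mx (Neg a).
Proof.
  intros H. pose proof (proj2 (mcs_max _ _ x) a H) as Hinc.
  apply (derives_mp _ (Imp a (Neg a))).
  - apply derives_derivable, D_taut. intro v. rewrite !beval_imp, !beval_neg. tauto.
  - apply derives_deduction, inconsistent_derives, Hinc.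
Qed.

Lemma mcs_closed a : derives mx a -> mx a.
Proof.
  intros H. apply NNPP. intros Hn. apply mcs_consistent.
  exists a. split; [exact H|exact (mcs_not_mem_derives_neg a Hn)].
Qed.

Lemma mcs_neg a : mx (Neg a) <-> ~ mx a.
Proof.
  split.
  - intros H1 H2. apply mcs_consistent. exists a. split; apply derives_mem; assumption.
  - intros H. apply mcs_closed, mcs_not_mem_derives_neg, H.
Qed.

Lemma mcs_and a b : mx (And a b) <-> mx a /\ mx b.
Proof.
  split.
  - intros H. split; apply mcs_closed, (derives_taut_conseq _ [And a b]);
      try (intros e [<-|[]]; apply derives_mem, H);
      intros v Hv; specialize (Hv _ (or_introl eq_refl)); cbn in Hv;
      apply andb_true_iff in Hv; tauto.
  - intros [H1 H2]. apply mcs_closed, (derives_taut_conseq _ [a; b]).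
    + intros e [<-|[<-|[]]]; apply derives_mem; assumption.
    + intros v Hv. cbn. apply andb_true_iff. split; apply Hv; cbn; auto.
Qed.

Lemma mcs_mp a b : der (Imp a b) -> mx a -> mx b.
Proof.
  intros Hd Ha. apply mcs_closed.
  exact (derives_mp _ _ _ (derives_derivable _ _ Hd) (derives_mem _ _ Ha)).
Qed.

End MaximalConsistent.

Section Lindenbaum.
Variable code : form -> nat.
Hypothesis code_inj : forall a b, code a = code b -> a = b.
Variable G : form -> Prop.
Hypothesis G_consistent : consistent G.

(* Stage [n + 1] decides the (unique) formula with code [n]. *)
Fixpoint chain (n : nat) : form -> Prop :=
  match n with
  | 0 => G
  | S n => fun c => chain n c \/ (code c = n /\ consistent (fun d => chain n d \/ d = c))
  end.

Lemma chain_mono n m c : n <= m -> chain n c -> chain m c.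
Proof. induction 1; auto. intros H0. left. auto. Qed.

Lemma chain_consistent n : consistent (chain n).
Proof.
  induction n as [|n IH]; cbn; auto.
  destruct (classic (exists c, code c = n /\ consistent (fun d => chain n d \/ d = c)))
    as [[c [Hc Hcons]]|Hno].
  - refine (consistent_mono _ _ _ Hcons). intros b [Hb|[Hb _]]; auto.
    right. apply code_inj. congruence.
  - refine (consistent_mono _ _ _ IH). intros b [Hb|[Hb Hcons]]; auto.
    exfalso. apply Hno. eauto.
Qed.

Definition chain_union (c : form) : Prop := exists n, chain n c.

Lemma chain_union_list l :
  (forall b, In b l -> chain_union b) -> exists N, forall b, In b l -> chain N b.
Proof.
  induction l as [|c l IH]; intros H.
  - exists 0. intros b [].
  - destruct IH as [N HN]. { intros b Hb. apply H. right; exact Hb. }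
    destruct (H c (or_introl eq_refl)) as [n Hn].
    exists (max n N). intros b [<-|Hb].
    + exact (chain_mono n _ c (Nat.le_max_l n N) Hn).
    + exact (chain_mono N _ b (Nat.le_max_r n N) (HN b Hb)).
Qed.

Lemma chain_union_max_consistent : max_consistent P A chain_union.
Proof.
  split.
  - intros [a [[l1 [H1 D1]] [l2 [H2 D2]]]].
    destruct (chain_union_list (l1 ++ l2)) as [N HN].
    { intros b Hb. apply in_app_or in Hb. destruct Hb; auto. }
    apply (chain_consistent N). exists a. split.
    + exists l1. split; auto. intros b Hb. apply HN, in_or_app. auto.
    + exists l2. split; auto. intros b Hb. apply HN, in_or_app. auto.
  - intros a Ha Hc. apply Ha. exists (S (code a)). right. split; auto.
    refine (consistent_mono _ _ _ Hc). intros b [Hb|Hb]; auto. left. exists (code a). exact Hb.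
Qed.

End Lindenbaum.

Lemma lindenbaum (code : form -> nat) (code_inj : forall a b, code a = code b -> a = b)
  (G : form -> Prop) : consistent G -> exists y : mcs, forall c, G c -> mcs_set y c.
Proof.
  intros HG. exists (Mcs _ _ _ (chain_union_max_consistent code code_inj G HG)).
  intros c Hc. exists 0. exact Hc.
Qed.

Definition successor (M : form -> form) (x y : mcs) : Prop :=
  forall d, mcs_set x (M d) -> mcs_set y d.

Section NormalOperator.
Variable M : form -> form.
Hypothesis M_distr : forall a b, der (Imp (M (Imp a b)) (Imp (M a) (M b))).
Hypothesis M_nec : forall a, der a -> der (M a).

Lemma derivable_imps_box L b : der (imps L b) -> der (imps (map M L) (M b)).
Proof.
  revert b. induction L as [|c L IH]; intros b H; cbn; auto.
  assert (Hexch : der (imps L (Imp c b))).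
  { apply (derivable_taut_conseq [imps (c :: L) b]).
    - intros v Hv. specialize (Hv _ (or_introl eq_refl)). cbn [Defs.imps] in Hv.
      rewrite beval_imp, beval_imps in Hv. rewrite beval_imps, beval_imp. auto.
    - intros e [<-|[]]. exact H. }
  apply (derivable_taut_conseq
           [imps (map M L) (M (Imp c b)); Imp (M (Imp c b)) (Imp (M c) (M b))]).
  - intros v Hv. pose proof (Hv _ (or_introl eq_refl)) as E1.
    pose proof (Hv _ (or_intror (or_introl eq_refl))) as E2.
    rewrite beval_imps in E1. rewrite !beval_imp in E2. rewrite beval_imp, beval_imps.
    auto.
  - intros e [<-|[<-|[]]]; auto.
Qed.

Lemma mcs_box_of_derivable (x : mcs) L b :
  (forall c, In c L -> mcs_set x (M c)) -> der (imps L b) -> mcs_set x (M b).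
Proof.
  intros HL Hd. apply mcs_closed. exists (map M L). split.
  - intros e He. apply in_map_iff in He. destruct He as [c [<- Hc]]. auto.
  - apply derivable_imps_box, Hd.
Qed.

Lemma successor_existence (code : form -> nat) (code_inj : forall a b, code a = code b -> a = b)
  (x : mcs) b : ~ mcs_set x (M b) -> exists y, successor M x y /\ ~ mcs_set y b.
Proof.
  intros Hb.
  assert (Hcons : consistent (fun c => mcs_set x (M c) \/ c = Neg b)).
  { intros Hinc.
    destruct (derives_deduction _ _ _ (inconsistent_derives _ b (fun H => H Hinc)))
      as [l [Hl Hd]].
    apply Hb, (mcs_box_of_derivable x l); auto.
    apply (derivable_taut_conseq [imps l (Imp (Neg b) b)]).
    - intros v Hv. specialize (Hv _ (or_introl eq_refl)).
      rewrite beval_imps in *. rewrite beval_imp, beval_neg in Hv.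
      intros Hl'. destruct (beval v b); auto.
    - intros e [<-|[]]. exact Hd. }
  destruct (lindenbaum code code_inj _ Hcons) as [y Hy].
  exists y. split.
  - intros d Hd. apply Hy. left. exact Hd.
  - apply mcs_neg, Hy. right. reflexivity.
Qed.

End NormalOperator.

Lemma sim_of_successor i (M : form -> form) (x y : mcs) :
  (forall d, der (Imp (K i d) (M (K i d)))) ->
  (forall d, der (Imp (Neg (K i d)) (M (Neg (K i d))))) ->
  successor M x y -> sim P A i x y.
Proof.
  intros Hpos Hneg Hs d. split.
  - intros Hx. exact (Hs _ (mcs_mp x _ _ (Hpos d) Hx)).
  - intros Hy. apply NNPP. intros Hx. apply (mcs_neg x) in Hx.
    exact (proj1 (mcs_neg y _) (Hs _ (mcs_mp x _ _ (Hneg d) Hx)) Hy).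
Qed.

Lemma subbase_open (B : mcs -> Prop) : subbase_c P A B -> open_c P A B.
Proof.
  intros HB x Bx. exists [B]. split.
  - intros B' [<-|[]]. auto.
  - intros y Hy. apply Hy. left. reflexivity.
Qed.

Lemma open_mem_of_int_successor (U : mcs -> Prop) (x y : mcs) :
  open_c P A U -> U x -> (forall i, sim P A i x y) -> successor Int x y -> U y.
Proof.
  intros HU Ux Hsim Hs. destruct (HU x Ux) as [l [Hl HlU]].
  apply HlU. intros B HB. destruct (Hl B HB) as [[x' [i [a HBiff]]] Bx].
  apply HBiff in Bx. destruct Bx as [Hsim' Hint]. apply HBiff. split.
  - intros d. rewrite (Hsim' d). apply Hsim.
  - apply Hs, (mcs_mp x (Int a)); [apply D_int4|exact Hint].
Qed.

Lemma interior_c_iff (S T : mcs -> Prop) x :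
  (forall y, S y <-> T y) -> (interior_c P A S x <-> interior_c P A T x).
Proof.
  intros HST. split; intros [U [HU [Ux HUS]]]; exists U; repeat split; auto;
    intros y Uy; apply HST; auto.
Qed.

Section Truth.
Variable code : form -> nat.
Hypothesis code_inj : forall a b, code a = code b -> a = b.

Lemma mcs_K_iff x i b : mcs_set x (K i b) <-> forall y, sim P A i x y -> mcs_set y b.
Proof.
  split.
  - intros Hx y Hs. apply Hs in Hx. exact (mcs_mp y _ _ (D_T P A i b) Hx).
  - intros H. apply NNPP. intros Hn.
    destruct (successor_existence (K i) (D_K P A i) (D_NecK P A i) code code_inj x b Hn)
      as [y [Hs Hy]].
    apply Hy, H, (sim_of_successor i (K i)); auto; intros d; [apply D_4|apply D_5].
Qed.

Variable i0 : A.

Lemma mcs_Int_iff x b : mcs_set x (Int b) <-> interior_c P A (fun y => mcs_set y b) x.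
Proof.
  split.
  - intros Hx. exists (fun y => sim P A i0 x y /\ hat P A (Int b) y). split; [|split].
    + apply subbase_open. exists x, i0, b. intros y. apply iff_refl.
    + split; [intros d; apply iff_refl|exact Hx].
    + intros y [_ Hy]. exact (mcs_mp y _ _ (D_intT P A b) Hy).
  - intros [U [HU [Ux HUb]]]. apply NNPP. intros Hn.
    destruct (successor_existence Int (D_intK P A) (D_NecInt P A) code code_inj x b Hn)
      as [y [Hs Hy]].
    apply Hy, HUb, (open_mem_of_int_successor U x); auto.
    intros i. apply (sim_of_successor i Int); auto; intros d;
      eapply derivable_imp_trans; [apply D_4|apply D_Kint|apply D_5|apply D_Kint].
Qed.

Lemma truth (phi : form) : forall x : mcs, mcs_set x phi <-> sat P A theta_star x phi.
Proof.
  induction phi as [p|b IH|b IHb c IHc|i b IH|b IH]; intros x; cbn [sat].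
  - reflexivity.
  - rewrite mcs_neg, IH. reflexivity.
  - rewrite mcs_and, IHb, IHc. reflexivity.
  - rewrite mcs_K_iff. split; intros H y Hy; apply IH; auto.
  - rewrite mcs_Int_iff. apply interior_c_iff. intros y. cbn. rewrite IH. tauto.
Qed.

End Truth.

End Canonical.

Lemma to_nat_inj m n m' n' : to_nat (m, n) = to_nat (m', n') -> m = m' /\ n = n'.
Proof.
  intros H. apply (f_equal of_nat) in H. rewrite !cancel_of_to in H.
  injection H as -> ->. split; reflexivity.
Qed.

Fixpoint form_code {P A} (cP : P -> nat) (cA : A -> nat) (a : form P A) : nat :=
  match a with
  | Var p => to_nat (0, cP p)
  | Neg b => to_nat (1, form_code cP cA b)
  | And b c => to_nat (2, to_nat (form_code cP cA b, form_code cP cA c))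
  | K i b => to_nat (3, to_nat (cA i, form_code cP cA b))
  | Int b => to_nat (4, form_code cP cA b)
  end.

Lemma form_code_inj {P A} (cP : P -> nat) (cA : A -> nat)
  (HP : forall p q, cP p = cP q -> p = q) (HA : forall i j, cA i = cA j -> i = j) :
  forall a b, form_code cP cA a = form_code cP cA b -> a = b.
Proof.
  induction a as [p|a IH|a IHa a' IHa'|i a IH|a IH]; destruct b as [q|b|b b'|j b|b];
    cbn [form_code]; intros E; apply to_nat_inj in E as [Etag E]; try discriminate;
    try apply to_nat_inj in E as [E E']; f_equal; auto.
Qed.

Lemma finite_injects_nat (A : Type) (l : list A) :
  (forall i, In i l) -> exists c : A -> nat, forall i j, c i = c j -> i = j.
Proof.
  intros Hl. exists (fun i => proj1_sig (constructive_indefinite_description _ (In_nth_error l i (Hl i)))).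
  intros i j E.
  destruct (constructive_indefinite_description _ (In_nth_error l i (Hl i))) as [n Hn].
  destruct (constructive_indefinite_description _ (In_nth_error l j (Hl j))) as [m Hm].
  cbn in E. subst. congruence.
Qed.

Theorem mainTheorem15 (P A : Type)
  (P_countable : exists f : P -> nat, forall p q, f p = f q -> p = q)
  (A_finite : exists l : list A, forall i, In i l)
  (A_nonempty : inhabited A)
  (phi : form P A) (x : mcs P A) :
  mcs_set x phi <-> sat P A theta_star x phi.
Proof.
  destruct P_countable as [cP HP].
  destruct A_finite as [l Hl].
  destruct (finite_injects_nat A l Hl) as [cA HA].
  destruct A_nonempty as [i0].
  exact (truth P A _ (form_code_inj cP cA HP HA) i0 phi x).
Qed.
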